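(* Let $2\le n<\infty$ be an integer and $R=\mathbb{Z}_2\times\cdots\times\mathbb{Z}_2$ ($n$ factors). Then $$\omega(\Gamma'(R))=\chi(\Gamma'(R))=\binom{n}{\lfloor n/2\rfloor}.$$
   Context: All rings are commutative with identity. $W^*(R)$ denotes the set of non-zero non-unit elements of $R$. The cozero-divisor graph $\Gamma'(R)$ is the simple graph with vertex set $W^*(R)$, in which distinct $a,b$ are adjacent iff $a\notin Rb$ and $b\notin Ra$. $\omega(G)$ denotes the clique number and $\chi(G)$ the chromatic number of a graph $G$. *)

From HB Require Import structures.
From mathcomp Require Import all_boot all_order all_algebra.

Set Implicit Arguments.
Unset Strict Implicit.
Unset Printing Implicit Defensive.

Import GRing.Theory.
Local Open Scope ring_scope.

(* A simple graph is given by a vertex set V : {set T} (T finite) and a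
   symmetric irreflexive-on-use adjacency relation e : rel T. *)
Section GraphInvariants.
Variable T : finType.
Variable V : {set T}.
Variable e : rel T.

Definition is_clique (K : {set T}) : bool :=
  (K \subset V) && [forall x in K, forall y in K, (x != y) ==> e x y].

Definition clique_number : nat :=
  (\max_(K : {set T} | is_clique K) #|K|)%N.

(* a proper colouring of the vertices of V (colours taken in 'I_#|T|,
   which is enough room for any colouring of V) *)
Definition proper_coloring (f : {ffun T -> 'I_#|T|}) : bool :=
  [forall x in V, forall y in V, e x y ==> (f x != f y)].

Definition chromatic_number : nat :=
  (\big[minn/#|T|]_(f : {ffun T -> 'I_#|T|} | proper_coloring f) #|f @: V|)%N.
End GraphInvariants.

Section Cozero.
Variable R : finComPzRingType.

Definition in_principal (a b : R) : bool := [exists r : R, a == r * b].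

Definition is_unit (a : R) : bool := [exists b : R, a * b == 1].

Definition W_star : {set R} := [set a : R | (a != 0) && ~~ is_unit a].

Definition cozero_adj : rel R :=
  fun a b => [&& a != b, ~~ in_principal a b & ~~ in_principal b a].
End Cozero.

Definition Z2n (n : nat) := {ffun 'I_n -> 'F_2}.
HB.instance Definition _ n := Finite.on (Z2n n).
HB.instance Definition _ n := GRing.PzRing.on (Z2n n).
HB.instance Definition _ n :=
  GRing.PzRing_hasCommutativeMul.Build (Z2n n) (@ffun_mulC _ _).

(* Identifying Z_2^n with the subsets of {0, ..., n-1} through supports, a lies
   in Rb iff supp a is contained in supp b, so Gamma'(R) is the incomparability
   graph on the nonempty proper subsets.  The subsets of size floor(n/2) form a
   clique of size binom(n, floor(n/2)).  Conversely, de Bruijn's symmetric chain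
   decomposition splits the Boolean lattice into chains, each meeting the middle
   layer exactly once; colouring a set by the middle member of its chain is
   proper, because two sets in one chain are comparable.  Since omega <= chi,
   both invariants equal binom(n, floor(n/2)). *)

From HB Require Import structures.
From mathcomp Require Import all_boot all_order all_algebra.
From mathcomp Require Import zify.
Set Implicit Arguments.
Unset Strict Implicit.
Unset Printing Implicit Defensive.

Lemma iota_rcons k l : iota k l.+1 = rcons (iota k l) (k + l).
Proof. by rewrite -addn1 iotaD cats1. Qed.

Lemma half_mem_iota k m : k.*2 <= m -> m./2 \in iota k (m - k.*2).+1.
Proof.
rewrite mem_iota; have := odd_double_half m.
by rewrite -!muln2; case: (odd m) => /=; lia.
Qed.

Lemma count1_flatten_eq (U : eqType) (L : seq (seq U)) (u : U) (C1 C2 : seq U) :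
    count_mem u (flatten L) = 1 -> C1 \in L -> C2 \in L -> u \in C1 -> u \in C2 ->
  C1 = C2.
Proof.
have pos_count (s : seq U) : u \in s -> 0 < count_mem u s by rewrite -has_count has_pred1.
elim: L => //= C L IH; rewrite count_cat => count1.
move=> /predU1P[->|C1L] /predU1P[->|C2L] // uC1 uC2.
- have := pos_count _ uC1; have : u \in flatten L by apply/flattenP; exists C2.
  by move/pos_count; lia.
- have := pos_count _ uC2; have : u \in flatten L by apply/flattenP; exists C1.
  by move/pos_count; lia.
apply: IH => //; have : u \in flatten L by apply/flattenP; exists C1.
by move/pos_count; lia.
Qed.

Lemma bigmin_leq (I : finType) (P : pred I) (F : I -> nat) x0 j :
  P j -> \big[minn/x0]_(i | P i) F i <= F j.
Proof.
move=> Pj; elim: (index_enum I) (mem_index_enum j) => // i s IH.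
rewrite big_cons inE => /predU1P[<-|js]; first by rewrite Pj geq_minl.
by case: (P i); [apply: leq_trans (geq_minr _ _) (IH js) | apply: IH].
Qed.

Section SymmetricChainDecomposition.
Variable T : finType.
Implicit Types (x : T) (s : seq T) (A X Y : {set T}) (C : seq {set T})
  (L : seq (seq {set T})).

(* de Bruijn's step: a chain X_0 < ... < X_l avoiding x yields the chains
   X_0 < ... < X_l < x + X_l and x + X_0 < ... < x + X_(l-1). *)
Definition scd_step x C : seq (seq {set T}) :=
  if C is X :: r then
    rcons C (x |: last X r) ::
      (if r is _ :: _ then [:: [seq x |: Y | Y <- belast X r]] else [::])
  else [::].

Fixpoint scd s : seq (seq {set T}) :=
  if s is x :: s' then flatten (map (scd_step x) (scd s')) else [:: [:: set0]].

Lemma count_mem_scd_step x C A :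
  count_mem A (flatten (scd_step x C)) =
  count_mem A C + count_mem A [seq x |: Y | Y <- C].
Proof.
case: C => [|X r] //.
have -> : flatten (scd_step x (X :: r)) =
    rcons (X :: r) (x |: last X r) ++ [seq x |: Y | Y <- belast X r].
  by case: r => [|Z r] /=; rewrite ?cats0.
rewrite lastI map_rcons -!cats1 !count_cat /=; lia.
Qed.

Lemma count_mem_flatten_scd_step x L A :
  count_mem A (flatten (flatten (map (scd_step x) L))) =
  count_mem A (flatten L) + count_mem A [seq x |: Y | Y <- flatten L].
Proof.
elim: L => //= C L IH.
by rewrite flatten_cat map_cat !count_cat IH count_mem_scd_step addnACA.
Qed.

Lemma count_mem_scd s A : uniq s -> count_mem A (flatten (scd s)) = (A \subset [set:: s]).
Proof.
elim: s A => [|x s IH] A /=; first by rewrite set_nil subset0 eq_sym; case: eqP.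
case/andP=> xs uniq_s; rewrite count_mem_flatten_scd_step IH // set_cons count_map.
have subs Y : Y \in flatten (scd s) -> Y \subset [set:: s].
  by rewrite -has_pred1 has_count IH //; case: (_ \subset _).
have [xA|xA] := boolP (x \in A).
- have -> : (A \subset [set:: s]) = false.
    by apply: contraNF xs => /subsetP/(_ x xA); rewrite inE.
  rewrite -subDset -IH //; apply: eq_in_count => Y /subs sYs /=.
  have xY : x \notin Y by apply: contra xs => /(subsetP sYs); rewrite inE.
  by apply/eqP/eqP => [<-|->]; rewrite ?setU1K ?setD1K.
rewrite (@eq_count _ _ pred0) ?count_pred0 ?addn0.
  by rewrite -subDset (setDidPl _) // disjoint_sym disjoints1.
by move=> Y /=; apply: contraNF xA => /eqP <-; rewrite setU11.
Qed.

Local Notation le_set := (fun A B : {set T} => A \subset B).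

Let le_set_trans : transitive le_set.
Proof. by move=> A B E; apply: subset_trans. Qed.

Definition symmetric_chain m C : Prop :=
  sorted le_set C /\
  exists2 k, k.*2 <= m & [seq #|Y| | Y <- C] = iota k (m - k.*2).+1.

Lemma scd_step_symmetric x m C D :
    symmetric_chain m C -> {in C, forall Y, x \notin Y} -> D \in scd_step x C ->
  symmetric_chain m.+1 D.
Proof.
move=> [sortC [k le2k sizeC]] xC.
case: C sortC sizeC xC => [|X r] // sortC sizeC xC.
have /rcons_inj[card_belast card_last] :
    rcons [seq #|Y| | Y <- belast X r] #|last X r| =
    rcons (iota k (m - k.*2)) (k + (m - k.*2)).
  by rewrite -map_rcons -lastI sizeC iota_rcons.
rewrite inE => /orP[/eqP->|].
  split; first by rewrite /= rcons_path [path _ _ _]sortC subsetUr.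
  exists k; first lia.
  have x_last : x \notin last X r by apply: xC; apply: mem_last.
  rewrite map_rcons sizeC cardsU1 x_last card_last.
  rewrite (_ : m.+1 - k.*2 = (m - k.*2).+1); last lia.
  by rewrite [RHS]iota_rcons add1n addnS.
case: r sortC sizeC xC card_belast {card_last} => [|Z r] // sortC sizeC xC card_belast.
rewrite inE => /eqP->; split.
  rewrite sorted_map; apply: (sub_sorted (e := le_set)) => [A B /= |]; first exact: setUS.
  by rewrite lastI in sortC; exact: (subseq_sorted le_set_trans (subseq_rcons _ _) sortC).
have size_r : size (Z :: r) = m - k.*2.
  by rewrite -(size_belast X) -(size_map (fun Y => #|Y|)) card_belast size_iota.
exists k.+1; first by rewrite /= in size_r; lia.
have -> : [seq #|Y| | Y <- [seq x |: Y | Y <- belast X (Z :: r)]] =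
          [seq #|Y|.+1 | Y <- belast X (Z :: r)].
  by rewrite -map_comp; apply/eq_in_map => Y /mem_belast/xC xY /=; rewrite cardsU1 xY.
rewrite (map_comp succn (fun Y => #|Y|)) card_belast -add1n iotaDl.
by congr (map _ (iota _ _)); rewrite /= in size_r; lia.
Qed.

Lemma mem_flatten_scd s Y : uniq s -> (Y \in flatten (scd s)) = (Y \subset [set:: s]).
Proof.
by move=> uniq_s; rewrite -has_pred1 has_count count_mem_scd //; case: (_ \subset _).
Qed.

Lemma scd_symmetric s C : uniq s -> C \in scd s -> symmetric_chain (size s) C.
Proof.
elim: s C => [|x s IH] C /=.
  by rewrite inE => _ /eqP->; split=> //; exists 0; rewrite //= cards0.
case/andP=> xs uniq_s /flatten_mapP[C' C's DC'].
apply: scd_step_symmetric (IH _ uniq_s C's) _ DC' => Y YC'.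
have : Y \subset [set:: s] by rewrite -mem_flatten_scd //; apply/flattenP; exists C'.
by apply: contraL => xY; apply/subsetPn; exists x; rewrite // inE.
Qed.

(* mid A is the middle member of the chain through A. *)
Lemma middle_layer_map : exists mid : {set T} -> {set T},
  (forall A, #|mid A| = #|T|./2) /\
  (forall A B, mid A = mid B -> A \subset B \/ B \subset A).
Proof.
pose L := scd (enum T); have uniq_T := enum_uniq T.
have count1 A : count_mem A (flatten L) = 1.
  rewrite count_mem_scd // (_ : [set:: enum T] = setT) ?subsetT //.
  by apply/setP => x; rewrite !inE mem_enum.
have chain_of A : exists2 C, C \in L & A \in C.
  by apply/flattenP; rewrite -has_pred1 has_count count1.
have mid_of A : exists M : {set T},
    #|M| = #|T|./2 /\ exists2 C, C \in L & (A \in C) && (M \in C).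
  have [C CL AC] := chain_of A.
  have [_ [k le2k cardC]] := scd_symmetric uniq_T CL.
  have : #|T|./2 \in [seq #|Y| | Y <- C].
    by rewrite cardC cardT; apply: half_mem_iota.
  by move/mapP => [M MC cardM]; exists M; split=> //; exists C; rewrite ?AC.
have [mid mid_spec] := fin_all_exists mid_of.
exists mid; split=> [A | A B midAB]; first by case: (mid_spec A).
have [_ [CA CAL /andP[ACA MCA]]] := mid_spec A.
have [_ [CB CBL /andP[BCB MCB]]] := mid_spec B.
rewrite midAB in MCA; have eqC := count1_flatten_eq (count1 _) CAL CBL MCA MCB; subst CA.
have [sortC _] := scd_symmetric uniq_T CBL.
have [le | /ltnW le] := leqP (index A CB) (index B CB); [left | right];
  exact: (sorted_leq_index le_set_trans (@subxx _ _) sortC).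
Qed.

End SymmetricChainDecomposition.

Section CliqueColoring.
Variables (T : finType) (V : {set T}) (e : rel T).

Lemma clique_leq_clique_number K : is_clique V e K -> #|K| <= clique_number V e.
Proof. exact: leq_bigmax_cond. Qed.

Lemma chromatic_number_leq f : proper_coloring V e f -> chromatic_number V e <= #|f @: V|.
Proof. exact: bigmin_leq. Qed.

Lemma clique_number_leq_chromatic_number : clique_number V e <= chromatic_number V e.
Proof.
apply/bigmax_leqP => K /andP[KV /forallP cliqueK].
apply: (big_ind (fun k => #|K| <= k)) => [||f /forallP proper_f]; first exact: max_card.
  by move=> a b Ka Kb; rewrite leq_min Ka Kb.
rewrite -(@card_in_imset _ _ f) ?subset_leq_card ?imsetS // => a b aK bK.
apply: contra_eq => neq_ab.
have adj_ab : e a b.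
  by move: (cliqueK a) => /implyP/(_ aK)/forallP/(_ b)/implyP/(_ bK)/implyP; apply.
move: (proper_f a) => /implyP/(_ (subsetP KV _ aK))/forallP/(_ b).
by move=> /implyP/(_ (subsetP KV _ bK))/implyP; apply.
Qed.

Lemma clique_coloring_tight K f c :
    is_clique V e K -> proper_coloring V e f -> #|K| = c -> #|f @: V| <= c ->
  clique_number V e = c /\ chromatic_number V e = c.
Proof.
move=> K_clique f_proper card_K f_range.
have omega_le_chi := clique_number_leq_chromatic_number.
have c_le_omega := clique_leq_clique_number K_clique; rewrite card_K in c_le_omega.
have chi_le_c := leq_trans (chromatic_number_leq f_proper) f_range.
split; apply/eqP; rewrite eqn_leq.
  by rewrite c_le_omega (leq_trans omega_le_chi chi_le_c).
by rewrite chi_le_c (leq_trans c_le_omega omega_le_chi).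
Qed.

End CliqueColoring.

Import GRing.Theory.
Local Open Scope ring_scope.

Lemma F2_natr_neq0 (z : 'F_2) : z = (z != 0)%:R.
Proof. by case: z => [[|[|k]] //= lt_k2]; apply: val_inj. Qed.

Section BooleanRing.
Variable n : nat.
Local Notation R := (Z2n n).
Implicit Types (a b : R) (A B : {set 'I_n}).

Definition support a : {set 'I_n} := [set i | a i != 0].
Definition indicator A : R := [ffun i => (i \in A)%:R].

Lemma indicatorK : cancel indicator support.
Proof. by move=> A; apply/setP=> i; rewrite inE ffunE; case: (i \in A); rewrite ?oner_eq0. Qed.

Lemma supportK : cancel support indicator.
Proof. by move=> a; apply/ffunP=> i; rewrite ffunE inE -F2_natr_neq0. Qed.

Lemma in_principalE a b : in_principal a b = (support a \subset support b).
Proof.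
apply/existsP/subsetP => [[r /eqP ->] i|sub_ab].
  by rewrite !inE ffunE; apply: contra => /eqP->; rewrite mulr0.
exists a; apply/eqP/ffunP=> i; rewrite ffunE.
have [ai0|ai_neq0] := eqVneq (a i) 0; first by rewrite ai0 mul0r.
have := sub_ab i; rewrite !inE ai_neq0 => /(_ isT) bi_neq0.
by rewrite [b i]F2_natr_neq0 bi_neq0 mulr1.
Qed.

Lemma is_unitE a : is_unit a = (support a == setT).
Proof.
apply/existsP/eqP => [[b /eqP/ffunP ab1]|supp_a].
  apply/setP=> i; rewrite !inE; apply/negP => /eqP ai0.
  by have /eqP := ab1 i; rewrite !ffunE ai0 mul0r eq_sym oner_eq0.
exists a; apply/eqP/ffunP=> i; rewrite !ffunE.
have : i \in support a by rewrite supp_a inE.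
by rewrite inE => ai_neq0; rewrite [a i]F2_natr_neq0 ai_neq0 mulr1.
Qed.

Lemma support_eq0 a : (support a == set0) = (a == 0).
Proof.
apply/eqP/eqP => [supp0|->]; last by apply/setP=> i; rewrite !inE ffunE eqxx.
by rewrite -[a]supportK supp0; apply/ffunP=> i; rewrite !ffunE inE.
Qed.

Lemma W_starE a : (a \in W_star R) = (support a != set0) && (support a != setT).
Proof. by rewrite inE is_unitE support_eq0. Qed.

Lemma cozero_adjE a b :
  cozero_adj a b =
  [&& a != b, ~~ (support a \subset support b) & ~~ (support b \subset support a)].
Proof. by rewrite /cozero_adj !in_principalE. Qed.

Lemma layer_clique k : (0 < k < n)%N ->
  exists2 K, is_clique (W_star R) (@cozero_adj R) K & #|K| = 'C(n, k).
Proof.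
case/andP=> k_gt0 k_ltn; pose layer := [set A : {set 'I_n} | #|A| == k].
exists (indicator @: layer); last first.
  by rewrite card_imset ?card_draws ?card_ord //; apply: can_inj indicatorK.
apply/andP; split.
  apply/subsetP=> a /imsetP[A]; rewrite inE => /eqP cardA ->.
  rewrite W_starE indicatorK; apply/andP; split; apply: contraTneq k_ltn => suppA.
    by rewrite -cardA suppA cards0 in k_gt0.
  by rewrite -cardA suppA cardsT card_ord ltnn.
apply/forall_inP => a /imsetP[A]; rewrite inE => /eqP cardA ->.
apply/forall_inP => b /imsetP[B]; rewrite inE => /eqP cardB ->.
apply/implyP => neq_AB; rewrite cozero_adjE neq_AB !indicatorK /=.
have {}neq_AB : A != B by apply: contra_neq neq_AB => ->.
apply/andP; split; apply: contra neq_AB => sub; last rewrite eq_sym.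
all: by rewrite eqEcard sub cardA cardB leqnn.
Qed.

Lemma chain_coloring (mid : {set 'I_n} -> {set 'I_n}) k :
    (forall A, #|mid A| = k) ->
    (forall A B, mid A = mid B -> A \subset B \/ B \subset A) ->
  exists2 f, proper_coloring (W_star R) (@cozero_adj R) f & (#|f @: W_star R| <= 'C(n, k))%N.
Proof.
move=> card_mid mid_cmp; pose layer := [set A : {set 'I_n} | #|A| == k].
have <- : #|layer| = 'C(n, k) by rewrite card_draws card_ord.
pose color A : 'I_#|R| := enum_rank (indicator A).
exists [ffun a => color (mid (support a))].
  apply/forall_inP => a _; apply/forall_inP => b _; apply/implyP.
  rewrite cozero_adjE !ffunE (inj_eq enum_rank_inj) (can_eq indicatorK).
  by case/and3P=> _ nab nba; apply/eqP => /mid_cmp[]; apply/negP.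
apply: leq_trans (leq_imset_card color layer).
apply/subset_leq_card/subsetP => _ /imsetP[a _ ->]; rewrite ffunE.
by apply/imsetP; exists (mid (support a)); rewrite // inE card_mid.
Qed.

End BooleanRing.

Theorem lemma2p5 (n : nat) (hn : (2 <= n)%N) :
  clique_number (W_star (Z2n n)) (@cozero_adj (Z2n n)) = 'C(n, n./2) /\
  chromatic_number (W_star (Z2n n)) (@cozero_adj (Z2n n)) = 'C(n, n./2).
Proof.
have half_bounds : (0 < n./2 < n)%N.
  by have := odd_double_half n; rewrite -!muln2; case: (odd n) => /=; lia.
have [K K_clique card_K] := layer_clique half_bounds.
have [mid [card_mid mid_cmp]] := middle_layer_map 'I_n; rewrite card_ord in card_mid.
have [f f_proper f_range] := chain_coloring card_mid mid_cmp.
exact: clique_coloring_tight K_clique f_proper card_K f_range.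
Qed.
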